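(* Let $m\ge1$ and let $\pi$ be the right action of $G_{m,m}$ on $H_{2m+1}=\{0,1\}^{2m+1}$ described below. Then: (1) for every $k=0,\dots,m$, the subgroup $G_{m,k}=\langle a_1,\dots,a_{m+k+1}\rangle$ acts transitively on $H_{m+k+1}$; (2) each generator $a_i$, $i=1,\dots,2m+1$, acts as an involution on $H_{2m+1}$; (3) for every $v\in H_{2m+1}$ and every $i=1,\dots,2m+1$, $\pi(a_i)v$ differs from $v$ in exactly one coordinate (in particular $\pi(a_i)$ has no fixed points); (4) for any $i\ne j$, $\pi(a_ia_j)$ has no fixed points.
   Context: $G_{m,k}=\langle a_1,\dots,a_{m+k+1}\mid [a_i,a_{i+1}]=1\ (1\le i\le m),\ a_{m+j+1}^{-1}a_ja_{m+j+1}=a_{m+j}\ (1\le j\le k)\rangle$, and $G_{m,0}\subset G_{m,1}\subset\dots\subset G_{m,m}$ via the obvious inclusions on generators. Let $H_n=\{0,1\}^n$, identified with a subset of $H_{n+1}$ by appending a last coordinate $0$, and let $H_n^*\subset H_{n+1}$ be the tuples with last coordinate $1$, so $H_{n+1}=H_n\sqcup H_n^*$. Let $\beta_i$ be the map flipping the $i$-th coordinate (fixing others), and $\varphi_{k,m+k}$ the map swapping the $k$-th and $(m+k)$-th coordinates. A right action is given by a map $\pi$ with $\pi(gh)=\pi(h)\pi(g)$ (composition of permutations). Define $\pi$ inductively: on $H_{m+1}$, $\pi(a_i)=\beta_i$ for $i=1,\dots,m+1$. For $k=1,\dots,m$, having $\pi(a_1),\dots,\pi(a_{m+k})$ on $H_{m+k}$,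 set $\pi(a_{m+k+1})=\beta_{m+k+1}$ on $H_{m+k+1}$, and for $1\le j\le m+k$ set $\pi(a_j)|_{H_{m+k}^*}=\beta_{m+k+1}\circ\varphi_{k,m+k}\circ\pi(a_j)|_{H_{m+k}}\circ\varphi_{k,m+k}\circ\beta_{m+k+1}$. These rules give a well-defined right action of $G_{m,m}$ on $H_{2m+1}$, restricting to an action of $G_{m,k}$ on $H_{m+k+1}$. *)

From mathcomp Require Import all_boot.
Set Implicit Arguments. Unset Strict Implicit. Unset Printing Implicit Defensive.

(* Points of H_n = {0,1}^n are represented as bit sequences of size n
   (false = 0, true = 1); coordinate i (1-based, 1 <= i <= n) of v is
   nth false v i.-1.  H_n is identified with the elements of H_{n+1}
   whose last coordinate is 0 (append false), H_n^* = last coordinate 1. *)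

Definition flip (i : nat) (v : seq bool) : seq bool :=
  mkseq (fun t => if t == i.-1 then ~~ nth false v t else nth false v t) (size v).

Definition swapc (i j : nat) (v : seq bool) : seq bool :=
  mkseq (fun t => nth false v (if t == i.-1 then j.-1
                               else if t == j.-1 then i.-1 else t)) (size v).

(* pi_act m k j v : the permutation pi(a_j) of H_{m+k+1} (1 <= j <= m+k+1),
   defined by the inductive rule of the paper:
   - on H_{m+1}: pi(a_i) = beta_i;
   - on H_{m+k+1} (k >= 1): pi(a_{m+k+1}) = beta_{m+k+1}; for j <= m+k,
     pi(a_j) is the old pi(a_j) on H_{m+k} (last coordinate 0), and on
     H_{m+k}^* it is beta_{m+k+1} o phi_{k,m+k} o pi(a_j) o phi_{k,m+k} o beta_{m+k+1}. *)
Fixpoint pi_act (m k j : nat) (v : seq bool) : seq bool :=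
  match k with
  | 0 => flip j v
  | k'.+1 =>
      if j == m + k' + 2 then flip j v
      else
        let w := take (m + k' + 1) v in
        if nth false v (m + k' + 1)
        then rcons (swapc k'.+1 (m + k'.+1)
                      (pi_act m k' j (swapc k'.+1 (m + k'.+1) w))) true
        else rcons (pi_act m k' j w) false
  end.

(* The G_{m,k}-orbit of u is then {v | connect (gen_step m k) u v}. *)
Definition gen_step (m k : nat) : rel ((m + k + 1).-tuple bool) :=
  fun u v => [exists j : 'I_(m + k + 1),
                (val v == pi_act m k j.+1 (val u)) || (val u == pi_act m k j.+1 (val v))].
Arguments gen_step : clear implicits.

From mathcomp Require Import all_boot zify.
Set Implicit Arguments. Unset Strict Implicit. Unset Printing Implicit Defensive.

(* Induction on k shows that every pi(a_j) flips exactly one coordinate of v: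
   on H^*_{m+k}, conjugation by phi_{k,m+k} only moves the flipped coordinate by
   the transposition (k, m+k).  Similar inductions show that each coordinate of v
   is flipped by some generator, which gives transitivity by correcting the
   coordinates one at a time, and that each pi(a_j) is an involution.  As there are
   as many generators as coordinates, distinct generators flip distinct coordinates
   of any v; with the involution property, pi(a_j) pi(a_i) v = v forces i = j. *)

Definition swap_index (a b t : nat) :=
  if t == a.-1 then b.-1 else if t == b.-1 then a.-1 else t.

Definition swap_coord (a b c : nat) := (swap_index a b c.-1).+1.

Lemma swap_indexK a b : involutive (swap_index a b).
Proof.
move=> t; rewrite /swap_index.
case: (t =P a.-1) => [->|ta]; first by rewrite eqxx; case: (b.-1 =P a.-1).
case: (t =P b.-1) => [->|tb]; first by rewrite eqxx.
by rewrite (introF eqP ta) (introF eqP tb).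
Qed.

Lemma swap_index_lt a b t n :
  0 < a <= n -> 0 < b <= n -> t < n -> swap_index a b t < n.
Proof. by rewrite /swap_index; do 2?case: eqP; lia. Qed.

Lemma swap_coordK a b c : 0 < c -> swap_coord a b (swap_coord a b c) = c.
Proof. by move=> c_gt0; rewrite /swap_coord /= swap_indexK prednK. Qed.

Lemma swap_coord_range a b c n :
  0 < a <= n -> 0 < b <= n -> 0 < c <= n -> 0 < swap_coord a b c <= n.
Proof.
by move=> ha hb hc; have := @swap_index_lt a b c.-1 n ha hb; rewrite /swap_coord; lia.
Qed.

Lemma size_flip i v : size (flip i v) = size v.
Proof. exact: size_mkseq. Qed.

Lemma size_swapc a b v : size (swapc a b v) = size v.
Proof. exact: size_mkseq. Qed.

Lemma nth_flip i v t : t < size v ->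
  nth false (flip i v) t = (t == i.-1) (+) nth false v t.
Proof. by move=> ht; rewrite nth_mkseq //; case: eqP. Qed.

Lemma nth_swapc a b v t : t < size v ->
  nth false (swapc a b v) t = nth false v (swap_index a b t).
Proof. exact: nth_mkseq. Qed.

Lemma flipK i : involutive (flip i).
Proof.
move=> v; apply: (@eq_from_nth _ false); rewrite ?size_flip // => t ht.
by rewrite !nth_flip ?size_flip // addbA addbb.
Qed.

Lemma swapcK a b v : 0 < a <= size v -> 0 < b <= size v ->
  swapc a b (swapc a b v) = v.
Proof.
move=> ha hb; apply: (@eq_from_nth _ false); rewrite ?size_swapc // => t ht.
by rewrite !nth_swapc ?size_swapc ?swap_indexK ?swap_index_lt.
Qed.

Lemma flip_coord_inj v c c' : 0 < c <= size v -> 0 < c' <= size v ->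
  flip c v = flip c' v -> c = c'.
Proof.
move=> hc hc' /(congr1 (nth false ^~ c.-1)).
rewrite !nth_flip ?eqxx; [|lia..].
by case: eqP => [|_]; [lia | case: (nth false v c.-1)].
Qed.

Lemma flip_rcons c w b : 0 < c <= size w ->
  flip c (rcons w b) = rcons (flip c w) b.
Proof.
move=> hc; apply: (@eq_from_nth _ false) => [|t].
  by rewrite !(size_flip, size_rcons).
rewrite size_flip size_rcons => ht.
rewrite nth_flip ?size_rcons // !nth_rcons size_flip.
case: ltngtP => [lt_t|gt_t|->]; [by rewrite nth_flip | lia |].
by rewrite (_ : size w == c.-1 = false) //; apply/eqP; lia.
Qed.

Lemma flip_last w b : flip (size w).+1 (rcons w b) = rcons w (~~ b).
Proof.
apply: (@eq_from_nth _ false); rewrite ?size_flip ?size_rcons // => t ht.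
by rewrite nth_flip ?size_rcons // !nth_rcons; case: ltngtP => // ->; rewrite eqxx.
Qed.

Lemma swapc_flip a b c w : 0 < a <= size w -> 0 < b <= size w -> 0 < c <= size w ->
  swapc a b (flip c (swapc a b w)) = flip (swap_coord a b c) w.
Proof.
move=> ha hb hc; apply: (@eq_from_nth _ false) => [|t].
  by rewrite !(size_swapc, size_flip).
rewrite size_swapc size_flip size_swapc => ht.
rewrite nth_swapc ?size_flip ?size_swapc // nth_flip ?size_swapc ?swap_index_lt //.
rewrite nth_swapc ?swap_index_lt // swap_indexK nth_flip //= /swap_coord /=.
congr (_ (+) _); apply/eqP/eqP => [<-|->]; by rewrite swap_indexK.
Qed.

Section GeneratorAction.

Variable m : nat.

Lemma pi_act_last k w b : size w = m + k + 1 ->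
  pi_act m k.+1 (m + k + 2) (rcons w b) = rcons w (~~ b).
Proof. by move=> hw; rewrite /= eqxx -flip_last hw; congr flip; lia. Qed.

Lemma pi_act_rcons k j w b : size w = m + k + 1 -> j != m + k + 2 ->
  pi_act m k.+1 j (rcons w b) =
  rcons (if b then swapc k.+1 (m + k + 1) (pi_act m k j (swapc k.+1 (m + k + 1) w))
         else pi_act m k j w) b.
Proof.
move=> hw /negbTE /= ->; rewrite (_ : m + k.+1 = m + k + 1); last lia.
by rewrite -hw -cats1 take_size_cat // cats1 nth_rcons ltnn eqxx; case: b.
Qed.

Lemma pi_act_flip k v j : size v = m + k + 1 -> 0 < j <= m + k + 1 ->
  exists2 c, 0 < c <= m + k + 1 & pi_act m k j v = flip c v.
Proof.
elim: k v j => [|k IH] v j hv hj; first by exists j.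
case/lastP: v hv => [|w b]; rewrite ?size_rcons => hv; first by move: hv => /=; lia.
have hw : size w = m + k + 1 by lia.
have [->|top_j] := eqVneq j (m + k + 2).
  exists (m + k + 2); first lia.
  by rewrite pi_act_last // -flip_last hw addn2 addn1.
have hj' : 0 < j <= m + k + 1 by move/eqP: top_j; lia.
rewrite pi_act_rcons //; case: b.
- have [|c hc ->] := IH (swapc k.+1 (m + k + 1) w) j _ hj'; first by rewrite size_swapc.
  have hc' : 0 < swap_coord k.+1 (m + k + 1) c <= m + k + 1.
    by apply: swap_coord_range; lia.
  exists (swap_coord k.+1 (m + k + 1) c); first lia.
  by rewrite swapc_flip ?flip_rcons ?hw //; lia.
- have [c hc ->] := IH w j hw hj'.
  by exists c; rewrite ?flip_rcons ?hw //; lia.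
Qed.

Lemma size_pi_act k v j : size v = m + k + 1 -> 0 < j <= m + k + 1 ->
  size (pi_act m k j v) = size v.
Proof. by move=> hv hj; have [c _ ->] := pi_act_flip hv hj; rewrite size_flip. Qed.

Lemma pi_actK k v j : size v = m + k + 1 -> 0 < j <= m + k + 1 ->
  pi_act m k j (pi_act m k j v) = v.
Proof.
elim: k v j => [|k IH] v j hv hj; first exact: flipK.
case/lastP: v hv => [|w b]; rewrite ?size_rcons => hv; first by move: hv => /=; lia.
have hw : size w = m + k + 1 by lia.
have [->|top_j] := eqVneq j (m + k + 2).
  by rewrite !pi_act_last ?negbK.
have hj' : 0 < j <= m + k + 1 by move/eqP: top_j; lia.
rewrite pi_act_rcons // pi_act_rcons //; last first.
  by case: b; rewrite /= ?size_swapc size_pi_act ?size_swapc ?hw.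
case: b => //; last by rewrite IH.
have hs : size (swapc k.+1 (m + k + 1) w) = m + k + 1 by rewrite size_swapc.
by rewrite swapcK ?size_pi_act ?hs ?IH ?swapcK ?hw //; lia.
Qed.

Lemma pi_act_onto k v c : size v = m + k + 1 -> 0 < c <= m + k + 1 ->
  exists2 j, 0 < j <= m + k + 1 & pi_act m k j v = flip c v.
Proof.
elim: k v c => [|k IH] v c hv hc; first by exists c.
case/lastP: v hv => [|w b]; rewrite ?size_rcons => hv; first by move: hv => /=; lia.
have hw : size w = m + k + 1 by lia.
have [->|top_c] := eqVneq c (m + k + 2).
  exists (m + k + 2); first lia.
  by rewrite pi_act_last // -flip_last hw addn2 addn1.
have hc' : 0 < c <= m + k + 1 by move/eqP: top_c; lia.
have top_j j : 0 < j <= m + k + 1 -> j != m + k + 2 by move=> ?; apply/eqP; lia.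
case: b.
- have hs : size (swapc k.+1 (m + k + 1) w) = m + k + 1 by rewrite size_swapc.
  have hsc : 0 < swap_coord k.+1 (m + k + 1) c <= m + k + 1.
    by apply: swap_coord_range; lia.
  have [j hj e] := IH _ _ hs hsc.
  exists j; first lia.
  by rewrite pi_act_rcons ?top_j // e swapc_flip ?swap_coordK ?flip_rcons ?hw //; lia.
- have [j hj e] := IH _ _ hw hc'.
  exists j; first lia.
  by rewrite pi_act_rcons ?top_j // e flip_rcons ?hw.
Qed.

(* Counting: the m + k + 1 generators realise all m + k + 1 distinct flips of v,
   so no two of them act alike on v. *)
Lemma pi_act_inj k v i j : size v = m + k + 1 -> i < m + k + 1 -> j < m + k + 1 ->
  pi_act m k i.+1 v = pi_act m k j.+1 v -> i = j.
Proof.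
move=> hv hi hj.
have flips_uniq : uniq (mkseq (fun c => flip c.+1 v) (m + k + 1)).
  apply/mkseq_uniqP => c c' /[!inE] hc hc' /flip_coord_inj; rewrite hv => e.
  by apply: succn_inj; apply: e; lia.
suff /mkseq_uniqP pi_inj : uniq (mkseq (fun j => pi_act m k j.+1 v) (m + k + 1)).
  exact: pi_inj.
apply: (leq_size_uniq flips_uniq); last by rewrite !size_mkseq.
move=> x /mapP [c]; rewrite mem_iota => /andP[_ hc] ->.
have [|j' hj' <-] := pi_act_onto (c := c.+1) hv; first lia.
by apply/mapP; exists j'.-1; rewrite ?mem_iota ?prednK //; lia.
Qed.

End GeneratorAction.

Lemma card_flip_diff n c (v : n.-tuple bool) : 0 < c <= n ->
  #|[set t : 'I_n | nth false (flip c v) t != nth false v t]| = 1.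
Proof.
move=> hc; have hc1 : c.-1 < n by lia.
suff -> : [set t : 'I_n | nth false (flip c v) t != nth false v t] = [set Ordinal hc1].
  exact: cards1.
apply/setP => t; rewrite !inE nth_flip ?size_tuple // -val_eqE /=.
by case: (_ == c.-1); case: (nth false v t).
Qed.

Lemma connect_flip n (e : rel (n.-tuple bool)) :
  (forall (x y : n.-tuple bool) c, 0 < c <= n -> val y = flip c x -> e x y) ->
  forall u v : n.-tuple bool, connect e u v.
Proof.
move=> e_flip.
suff agree_from i : forall u v : n.-tuple bool,
    (forall t, i <= t -> nth false u t = nth false v t) -> connect e u v.
  by move=> u v; apply: (agree_from n) => t ht; rewrite !nth_default ?size_tuple.
elim: i => [|i IH] u v huv.
  by rewrite (_ : u = v) //; apply: eq_from_tnth => t; rewrite !(tnth_nth false) huv.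
have [eq_i|neq_i] := eqVneq (nth false u i) (nth false v i).
  by apply: IH => t; rewrite leq_eqVlt => /predU1P [<-|]; [|apply: huv].
have lt_in : i < n.
  by rewrite ltnNge; apply: contra neq_i => ?; rewrite !nth_default ?size_tuple.
have size_u' : size (flip i.+1 u) == n by rewrite size_flip size_tuple.
apply: (connect_trans (y := Tuple size_u')).
  by apply/connect1/(e_flip _ _ i.+1).
apply: IH => t ht /=; have [lt_tn|?] := ltnP t n; last first.
  by rewrite !nth_default ?size_flip ?size_tuple.
rewrite nth_flip ?size_tuple //=.
have [->|ne_ti] := eqVneq t i; last by apply: huv; rewrite ltn_neqAle eq_sym ne_ti.
by move: neq_i; case: (nth false u i); case: (nth false v i).
Qed.

Lemma gen_step_flip m k (x y : (m + k + 1).-tuple bool) c :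
  0 < c <= m + k + 1 -> val y = flip c x -> gen_step m k x y.
Proof.
move=> hc hy; have [j hj e] := pi_act_onto (size_tuple x) hc.
have lt_j : j.-1 < m + k + 1 by lia.
by apply/existsP; exists (Ordinal lt_j); rewrite /= prednK ?e ?hy ?eqxx //; lia.
Qed.

Theorem proposition6p1 (m : nat) (hm : 0 < m) :
  (* (1) G_{m,k} acts transitively on H_{m+k+1}, k = 0..m *)
  (forall k : nat, k <= m ->
     forall u v : (m + k + 1).-tuple bool, connect (gen_step m k) u v) /\
  (* (2) each pi(a_i) is an involution on H_{2m+1} *)
  (forall (i : 'I_(m + m + 1)) (v : (m + m + 1).-tuple bool),
     pi_act m m i.+1 (pi_act m m i.+1 (val v)) = val v) /\
  (* (3) pi(a_i) v lies in H_{2m+1} and differs from v in exactly one coordinate *)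
  (forall (i : 'I_(m + m + 1)) (v : (m + m + 1).-tuple bool),
     size (pi_act m m i.+1 (val v)) = m + m + 1 /\
     #|[set t : 'I_(m + m + 1) |
          nth false (pi_act m m i.+1 (val v)) t != nth false (val v) t]| = 1) /\
  (* (4) for i <> j, pi(a_i a_j) = pi(a_j) o pi(a_i) has no fixed point *)
  (forall (i j : 'I_(m + m + 1)) (v : (m + m + 1).-tuple bool),
     i != j -> pi_act m m j.+1 (pi_act m m i.+1 (val v)) != val v).
Proof.
have gen_range (i : 'I_(m + m + 1)) : 0 < i.+1 <= m + m + 1 by exact: ltn_ord.
split; first by move=> k _; apply: connect_flip; exact: gen_step_flip.
split; first by move=> i v; rewrite pi_actK ?size_tuple.
split.
  move=> i v; have [c hc ->] := pi_act_flip (size_tuple v) (gen_range i).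
  by rewrite size_flip size_tuple card_flip_diff.
move=> i j v; apply: contra_neq => /(congr1 (pi_act m m j.+1)).
rewrite pi_actK ?size_pi_act ?size_tuple // => same_act.
by apply: ord_inj; apply: (pi_act_inj (size_tuple v)) same_act.
Qed.
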